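(* Let $(M_I,\triangleright)$ be a prefactor system and $\alpha,\beta$ consistent sets in it. The following are equivalent: (1) $\alpha^m=\beta^m$; (2) $a_i\approx b_i$ for all $i\in I$, $a_i\in\alpha\cap M_i$, $b_i\in\beta\cap M_i$; (3) $a_i\approx b_j$ for all $i,j\in I$, $a_i\in\alpha\cap M_i$, $b_j\in\beta\cap M_j$.
   Context: Let $(I,\le)$ be a non-empty directed preordered set. Fix a family $\mathcal F(I)$ of subsets of $I$ such that every member is cofinal in $I$, $\mathcal F(I)$ is closed under supersets and finite intersections, and $\mathcal F(I)$ contains every non-empty upward closed subset of $I$. A system $(M_I,\triangleright)$ consists of sets $M_i$ ($i\in I$, pairwise disjoint) and relations $\triangleright\subseteq M_{i'}\times M_i$ for $i\le i'$, reflexive for $i=i'$. $a_i\approx b_j$ iff there are $i'\ge i,j$ and $c\in M_{i'}$ with $c\triangleright a_i$, $c\triangleright b_j$. A prefactor system is a system with $a_{i'}\approx a_i\iff a_{i'}\triangleright a_i$ for all $i\le i'$. A consistent set is a set $\alpha\subseteq\bigcup_i M_i$ with $a_{i'}\triangleright a_i$ for all $a_{i'}\in\alpha\cap M_{i'}$, $a_i\in\alpha\cap M_i$, $i'\ge i$, and with $\{i\mid\alpha\cap M_i\ne\emptyset\}\in\mathcal F(I)$. For a consistent set $\alpha$, $\alpha^m$ denotes the unique inclusion-maximal consistent set containing $\alpha$. *)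

Section Systems.
Variables (I : Type) (le : I -> I -> Prop).

Definition directed_preorder : Prop :=
  (forall i, le i i) /\ (forall i j k, le i j -> le j k -> le i k) /\
  (exists i : I, True) /\ (forall i j, exists k, le i k /\ le j k).

Definition cofinal (S : I -> Prop) : Prop := forall i, exists j, le i j /\ S j.
Definition upward_closed (S : I -> Prop) : Prop := forall i j, S i -> le i j -> S j.

Definition admissible_family (F : (I -> Prop) -> Prop) : Prop :=
  (forall S, F S -> cofinal S) /\
  (forall S T, F S -> (forall i, S i -> T i) -> F T) /\
  F (fun _ => True) /\
  (forall S T, F S -> F T -> F (fun i => S i /\ T i)) /\
  (forall S, (exists i, S i) -> upward_closed S -> F S).

(* A system: sets M i (disjoint by construction, as a dependent family) and
   relations tr i i' : M i' -> M i -> Prop, [tr i i' c a] meaning c |> a,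
   considered for i <= i'. *)
Variables (M : I -> Type) (tr : forall i i' : I, M i' -> M i -> Prop).

Definition system_refl : Prop := forall i (a : M i), tr i i a a.

Definition approx {i} (a : M i) {j} (b : M j) : Prop :=
  exists i' (c : M i'), le i i' /\ le j i' /\ tr i i' c a /\ tr j i' c b.

Definition prefactor : Prop :=
  forall i i' (a' : M i') (a : M i), le i i' -> (approx a' a <-> tr i i' a' a).

Definition subset_family (A B : forall i, M i -> Prop) : Prop :=
  forall i (a : M i), A i a -> B i a.

Definition consistent (F : (I -> Prop) -> Prop) (A : forall i, M i -> Prop) : Prop :=
  (forall i i' (a : M i) (a' : M i'), A i a -> A i' a' -> le i i' -> tr i i' a' a) /\
  F (fun i => exists a : M i, A i a).

(* G is an inclusion-maximal consistent set containing A (i.e. G = A^m) *)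
Definition is_max_ext (F : (I -> Prop) -> Prop) (A G : forall i, M i -> Prop) : Prop :=
  consistent F G /\ subset_family A G /\
  (forall D, consistent F D -> subset_family G D -> subset_family D G).

End Systems.


(* In a prefactor system, the maximal consistent set containing a consistent
   set [alpha] is the set of all [c] with [c ≈ a] for every [a ∈ alpha].
   Consequently [alpha^m = beta^m] as soon as every element of [alpha] is
   [≈]-related to every element of [beta]; conversely, elements of a common
   consistent set are [≈]-related because they have a common consistent
   element above them.  Same-level relatedness upgrades to relatedness across
   levels by going up to a level where both [alpha] and [beta] live, where
   [≈] coincides with [▷]. *)

Section PrefactorSystems.
Variables (I : Type) (le : I -> I -> Prop) (F : (I -> Prop) -> Prop) (M : I -> Type)
  (tr : forall i i' : I, M i' -> M i -> Prop).
Hypothesis HI : directed_preorder I le.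
Hypothesis HF : admissible_family I le F.
Hypothesis Hrefl : system_refl I M tr.
Hypothesis Hpre : prefactor I le M tr.

Local Notation "a ≈ b" := (approx I le M tr a b) (at level 70).
Local Notation "c ▷ a" := (tr _ _ c a) (at level 70).
Local Notation consistent := (consistent I le M tr F).
Local Notation subset := (subset_family I M).

Let le_refl : forall i, le i i := proj1 HI.
Let le_trans : forall i j k, le i j -> le j k -> le i k := proj1 (proj2 HI).
Let le_directed : forall i j, exists k, le i k /\ le j k := proj2 (proj2 (proj2 HI)).
Let F_cofinal : forall S, F S -> cofinal I le S := proj1 HF.
Let F_superset : forall S T, F S -> (forall i, S i -> T i) -> F T := proj1 (proj2 HF).
Let F_meet : forall S T, F S -> F T -> F (fun i => S i /\ T i) :=
  proj1 (proj2 (proj2 (proj2 HF))).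

Lemma upper_bound_in (S : I -> Prop) i j : F S -> exists k, le i k /\ le j k /\ S k.
Proof.
  intros HS.
  destruct (le_directed i j) as [k0 [Hik0 Hjk0]].
  destruct (F_cofinal S HS k0) as [k [Hk0k Sk]].
  exists k. eauto.
Qed.

Lemma approx_sym i (a : M i) j (b : M j) : a ≈ b -> b ≈ a.
Proof. intros [k [c H]]. exists k, c. tauto. Qed.

Lemma approx_of_tr i i' (a' : M i') (a : M i) : le i i' -> a' ▷ a -> a' ≈ a.
Proof. intros Hle Ht. exists i', a'. auto. Qed.

Lemma tr_same_level_sym k (c d : M k) : c ▷ d -> d ▷ c.
Proof.
  intros Hcd. apply Hpre; auto.
  apply approx_sym, approx_of_tr; auto.
Qed.

Lemma tr_of_common_upper j l k (b : M j) (d : M l) (e : M k) :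
  le j l -> le l k -> e ▷ d -> e ▷ b -> d ▷ b.
Proof.
  intros Hjl Hlk Hed Heb. apply Hpre; auto.
  exists k, e. eauto.
Qed.

Lemma consistent_approx A i j (a : M i) (b : M j) :
  consistent A -> A i a -> A j b -> a ≈ b.
Proof.
  intros [A_tr A_supp] Aa Ab.
  destruct (upper_bound_in _ i j A_supp) as [k [Hik [Hjk [c Ac]]]].
  exists k, c. auto.
Qed.

Lemma approx_across_levels A B :
  consistent A -> consistent B ->
  (forall i (a b : M i), A i a -> B i b -> a ≈ b) ->
  forall i j (a : M i) (b : M j), A i a -> B j b -> a ≈ b.
Proof.
  intros [A_tr A_supp] [B_tr B_supp] same_level i j a b Aa Bb.
  destruct (upper_bound_in _ i j (F_meet _ _ A_supp B_supp))
    as [k [Hik [Hjk [[a' Aa'] [b' Bb']]]]].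
  assert (Hb'a' : b' ▷ a').
  { apply tr_same_level_sym, Hpre; auto. }
  exists k, a'. repeat split; auto.
  apply (tr_of_common_upper _ _ _ _ _ b'); auto.
Qed.

Definition approx_closure (A : forall i, M i -> Prop) : forall l, M l -> Prop :=
  fun l c => forall i (a : M i), A i a -> c ≈ a.

Lemma subset_approx_closure A : consistent A -> subset A (approx_closure A).
Proof. intros HA i a Aa j b Ab. apply (consistent_approx A); auto. Qed.

Lemma approx_closure_consistent A : consistent A -> consistent (approx_closure A).
Proof.
  intros HA. split.
  - intros l l' c d Hc Hd Hll'.
    destruct (upper_bound_in _ l' l' (proj2 HA)) as [k [Hl'k [_ [a Aa]]]].
    assert (Hlk : le l k) by eauto.
    apply (tr_of_common_upper _ _ _ _ _ a); auto.
    + apply Hpre; auto. apply approx_sym; auto.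
    + apply Hpre; auto. apply approx_sym; auto.
  - apply (F_superset _ _ (proj2 HA)).
    intros i [a Aa]. exists a. apply subset_approx_closure; auto.
Qed.

Lemma consistent_subset_approx_closure A D :
  consistent D -> subset A D -> subset D (approx_closure A).
Proof. intros HD HAD l d Dd i a Aa. apply (consistent_approx D); auto. Qed.

Lemma is_max_ext_approx_closure A : consistent A -> is_max_ext I le M tr F A (approx_closure A).
Proof.
  intros HA. split; [|split].
  - apply approx_closure_consistent; auto.
  - apply subset_approx_closure; auto.
  - intros D HD HGD. apply consistent_subset_approx_closure; auto.
    intros i a Aa. apply HGD, subset_approx_closure; auto.
Qed.

Lemma is_max_ext_of_subset A B G :
  is_max_ext I le M tr F A G -> subset B G -> is_max_ext I le M tr F B G.
Proof. intros [HG [_ Hmax]] HBG. split; auto. Qed.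

End PrefactorSystems.

Theorem lemma2p10 (I : Type) (le : I -> I -> Prop)
  (F : (I -> Prop) -> Prop) (M : I -> Type)
  (tr : forall i i' : I, M i' -> M i -> Prop)
  (HI : directed_preorder I le) (HF : admissible_family I le F)
  (Hrefl : system_refl I M tr) (Hpre : prefactor I le M tr)
  (alpha beta : forall i, M i -> Prop)
  (Ha : consistent I le M tr F alpha) (Hb : consistent I le M tr F beta) :
  ((exists G, is_max_ext I le M tr F alpha G /\ is_max_ext I le M tr F beta G) <->
   (forall i (a b : M i), alpha i a -> beta i b -> approx I le M tr a b)) /\
  ((forall i (a b : M i), alpha i a -> beta i b -> approx I le M tr a b) <->
   (forall i j (a : M i) (b : M j), alpha i a -> beta j b -> approx I le M tr a b)).
Proof.
  pose proof (approx_across_levels I le F M tr HI HF Hrefl Hpre alpha beta Ha Hb) as across.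
  split; [split|split; auto].
  - intros [G [[HG [alphaG _]] [_ [betaG _]]]] i a b Aa Bb.
    apply (consistent_approx I le F M tr HI HF G); auto.
  - intros same_level. exists (approx_closure I le M tr alpha).
    pose proof (is_max_ext_approx_closure I le F M tr HI HF Hpre alpha Ha) as Hmax.
    split; auto.
    apply (is_max_ext_of_subset I le F M tr alpha); auto.
    intros j b Bb i a Aa. apply (approx_sym I le M tr), across; auto.
Qed.
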